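(* Let $G=(V,E)$ be a graph and $T\subseteq E$ a spanning tree of $G$. Let $e\in T$ and $s_e\in E\setminus T$ be such that $T'=T-e+s_e$ is a spanning tree. Let $f\in T\setminus\{e\}$ and $s\in E\setminus(T\cup\{s_e\})$ (so $f\in T'$ and $s\notin T'$). Let $C_e$ be the unique cycle in $T+s_e$, $C_s$ the unique cycle in $T+s$, $C'_e$ the unique cycle in $T'+e$, and $C'_s$ the unique cycle in $T'+s$. Suppose that neither of the following holds: (i) $f\in C_e$ and $e\in C_s$; (ii) $f\in C'_e$ and $s_e\in C'_s$. Then $T-f+s$ is connected if and only if $T'-f+s$ is connected. *)

(* A simple graph G = (V,E): V a finite type of vertices,
   E a set of 2-element vertex subsets. Edge sets are {set {set V}}. *)
From mathcomp Require Import all_boot.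
Set Implicit Arguments. Unset Strict Implicit. Unset Printing Implicit Defensive.

Section Graphs.
Variable V : finType.

Definition simple_edges (E : {set {set V}}) : Prop :=
  forall c, c \in E -> #|c| = 2.

Definition adj (F : {set {set V}}) : rel V := fun x y => [set x; y] \in F.

Definition connected_sp (F : {set {set V}}) : Prop :=
  forall x y : V, connect (adj F) x y.

Definition supp (C : {set {set V}}) : {set V} :=
  [set v | [exists c in C, v \in c]].

Definition is_cycle (C : {set {set V}}) : Prop :=
  [/\ C != set0,
      (forall c, c \in C -> #|c| = 2),
      (forall v, v \in supp C -> #|[set c in C | v \in c]| = 2) &
      (forall x y, x \in supp C -> y \in supp C -> connect (adj C) x y)].

Definition acyclic (F : {set {set V}}) : Prop :=
  forall C : {set {set V}}, C \subset F -> ~ is_cycle C.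

Definition spanning_tree (E T : {set {set V}}) : Prop :=
  [/\ T \subset E, connected_sp T & acyclic T].

End Graphs.

From mathcomp Require Import all_boot.

(* By
   the exchange property of spanning trees, T - f + s (resp. T' - f + s) is
   connected iff deleting f from T (resp. T') separates the two ends of s; and
   by the fundamental-cycle property, f lies on C_e iff T - f separates the
   ends of se, and e lies on C_s iff T - e separates the ends of s.  Excluding
   case (i) thus leaves two situations:
   - the ends of se are joined in T - f: then T - f and T' - f have the same
     components (T' - f is T - f plus a redundant edge, and T - f is maximal
     among graphs separating the ends of f);
   - the ends of s are joined in T - e: then a walk joining the ends of s in
     T - f (resp. T' - f) can be rerouted to avoid e (resp. se).
   Hence case (ii) need not be excluded. *)

Section Connectivity.
Context {V : finType}.
Implicit Types (F G H : {set {set V}}) (x y u v : V).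

Lemma adj_sym F : symmetric (adj F).
Proof. by move=> x y; rewrite /adj setUC. Qed.

Lemma connect_adjC F x y : connect (adj F) x y = connect (adj F) y x.
Proof. exact: (sym_connect_sym (adj_sym F)). Qed.

Lemma connect_adj_sub {F G x y} :
  F \subset G -> connect (adj F) x y -> connect (adj G) x y.
Proof.
by move=> FG; apply: connect_sub => u v uv; apply/connect1/(subsetP FG).
Qed.

Lemma connect_pair {G a1 a2 u v} :
  [set u; v] = [set a1; a2] -> connect (adj G) a1 a2 -> connect (adj G) u v.
Proof.
move=> uv_a a12.
have /set2P[->|->] : u \in [set a1; a2] by rewrite -uv_a set21.
all: have /set2P[->|->] : v \in [set a1; a2] by rewrite -uv_a set22.
all: by rewrite ?connect0 // connect_adjC.
Qed.

Lemma connect_redundant_edge {F G a1 a2 x y} :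
  F \subset G :|: [set [set a1; a2]] -> connect (adj G) a1 a2 ->
  connect (adj F) x y -> connect (adj G) x y.
Proof.
move=> FG a12; apply: connect_sub => u v /(subsetP FG).
rewrite !inE => /orP[uvG | /eqP uv_a]; first exact: connect1.
exact: connect_pair uv_a a12.
Qed.

Lemma connect_delete_edge {F} a1 a2 {u v} :
  let D := connect (adj (F :\ [set a1; a2])) in
  connect (adj F) u v ->
  D u v \/ ((D u a1 \/ D u a2) /\ (D a1 v \/ D a2 v)).
Proof.
move=> D uv.
pose P := [pred w | D u w || (D u a1 || D u a2) && (D a1 w || D a2 w)].
suff : v \in P by rewrite inE => /orP[-> | /andP[/orP[]-> /orP[]->]]; auto.
rewrite -(closed_connect _ uv); first by rewrite inE /D connect0.
apply: intro_closed => [|w z wz]; first exact: (sym_connect_sym (adj_sym F)).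
have [wz_a | wz_na] := eqVneq [set w; z] [set a1; a2].
  have /set2P z_a : z \in [set a1; a2] by rewrite -wz_a set22.
  have /set2P w_a : w \in [set a1; a2] by rewrite -wz_a set21.
  have a_end : D a1 z || D a2 z by case: z_a => ->; rewrite /D connect0 ?orbT.
  rewrite !inE a_end andbT => /orP[Duw | /andP[-> _]]; last by rewrite orbT.
  by case: w_a Duw => <- ->; rewrite ?orbT.
have Dwz : D w z by apply: connect1; rewrite /adj !inE wz_na.
rewrite !inE => /orP[Duw | /andP[-> Daw]].
  by rewrite [D u z](connect_trans Duw Dwz).
suff -> : D a1 z || D a2 z by rewrite orbT.
by case/orP: Daw => Daw; apply/orP; [left | right]; apply: connect_trans Daw Dwz.
Qed.

Lemma connected_delete_edge {F} a1 a2 v : connected_sp F ->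
  connect (adj (F :\ [set a1; a2])) a1 v \/ connect (adj (F :\ [set a1; a2])) a2 v.
Proof.
by move=> cF; case: (connect_delete_edge a1 a2 (cF a1 v)) => [|[_]]; auto.
Qed.

(* Let the components of F refine those of H, in which a1 and a2 are
   separated.  If u and v are joined in H and each is joined in F to one of
   a1, a2, then they are joined to the same one, hence to each other. *)
Lemma connect_via_ends {F H a1 a2 u v} :
  (forall x y, connect (adj F) x y -> connect (adj H) x y) ->
  ~~ connect (adj H) a1 a2 -> connect (adj H) u v ->
  connect (adj F) u a1 \/ connect (adj F) u a2 ->
  connect (adj F) a1 v \/ connect (adj F) a2 v -> connect (adj F) u v.
Proof.
move=> FH sepH Huv [ua | ua] [av | av]; try exact: connect_trans ua av.
all: case/negP: sepH; rewrite connect_adjC in ua; rewrite connect_adjC in av.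
  exact: connect_trans (connect_trans (FH _ _ ua) Huv) (FH _ _ av).
rewrite connect_adjC.
exact: connect_trans (connect_trans (FH _ _ ua) Huv) (FH _ _ av).
Qed.

Lemma connect_avoid_edge {F H a1 a2 u v} :
  F :\ [set a1; a2] \subset H -> ~~ connect (adj H) a1 a2 ->
  connect (adj H) u v -> connect (adj F) u v ->
  connect (adj (F :\ [set a1; a2])) u v.
Proof.
move=> FH sepH Huv /(connect_delete_edge a1 a2)[// | [ua av]].
by apply: connect_via_ends sepH Huv ua av => x y; apply: connect_adj_sub.
Qed.

Lemma connect_delete_maximal {G H f1 f2 x y} :
  connected_sp G ->
  (forall u v, connect (adj (G :\ [set f1; f2])) u v -> connect (adj H) u v) ->
  ~~ connect (adj H) f1 f2 -> connect (adj H) x y ->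
  connect (adj (G :\ [set f1; f2])) x y.
Proof.
move=> cG GH sepH Hxy; apply: connect_via_ends GH sepH Hxy _ _.
  by rewrite !(connect_adjC _ x); apply: connected_delete_edge.
exact: connected_delete_edge.
Qed.

End Connectivity.

Lemma card_sep_sum (T : finType) (A : {set T}) (P : pred T) :
  #|[set x in A | P x]| = \sum_(x in A) P x.
Proof.
rewrite -sum1dep_card big_mkcondr /=; apply: eq_bigr => x _.
by case: (P x).
Qed.

Section Degrees.
Context {V : finType}.
Implicit Types (F C : {set {set V}}) (x y v : V).

Definition degree F v := #|[set c in F | v \in c]|.

Lemma degreeD1 {F c} v : c \in F -> degree F v = degree (F :\ c) v + (v \in c).
Proof.
move=> cF; rewrite /degree !card_sep_sum (bigD1 c cF) addnC /=; congr (_ + _).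
by apply: eq_bigl => d; rewrite !inE andbC.
Qed.

Lemma degree_sum_even {F} {A : {set V}} :
  simple_edges F -> (forall x y, [set x; y] \in F -> (x \in A) = (y \in A)) ->
  ~~ odd (\sum_(v in A) degree F v).
Proof.
move=> F2 closedA; under eq_bigr do rewrite /degree card_sep_sum.
rewrite exchange_big /= -dvdn2; apply: dvdn_sum => c cF.
have /cards2P[x [y [xy c_xy]]] : #|c| == 2 by rewrite F2.
have Ay : (y \in A) = (x \in A) by rewrite (closedA x y) // -c_xy.
rewrite -card_sep_sum -/(A :&: c); case xA: (x \in A).
  have /setIidPr -> : c \subset A by rewrite c_xy subUset !sub1set Ay xA.
  by rewrite c_xy cards2 xy.
suff -> : A :&: c = set0 by rewrite cards0.
by apply/setP => v; rewrite c_xy !inE; case: eqVneq => [->|_]; rewrite ?xA //=;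
   case: eqVneq => [->|_]; rewrite ?Ay ?xA ?andbF.
Qed.

Lemma supp_edge {F x y} : [set x; y] \in F -> (x \in supp F) && (y \in supp F).
Proof.
by move=> xyF; rewrite !inE; apply/andP; split; apply/existsP;
   exists [set x; y]; rewrite xyF ?set21 ?set22.
Qed.

(* In a cycle, the two ends of an edge remain joined after deleting that
   edge: otherwise the component of one end would contain exactly one vertex
   of odd degree, contradicting the handshake lemma. *)
Lemma cycle_delete_edge {C x y} :
  is_cycle C -> [set x; y] \in C -> connect (adj (C :\ [set x; y])) x y.
Proof.
case=> _ C2 Cdeg _ xyC; set D := C :\ [set x; y].
have D2 : simple_edges D by move=> d /setD1P[_ /C2].
apply/negPn/negP => nxy; set A := [set v | connect (adj D) x v].
have xA : x \in A by rewrite inE connect0.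
have closedA u w : [set u; w] \in D -> (u \in A) = (w \in A).
  by move=> uwD; rewrite !inE; apply: (connect_closed (sym_connect_sym (adj_sym D)) x uwD).
have suppA v : v \in A -> v \in supp C.
  rewrite inE => /(closed_connect _) <-; first by case/andP: (supp_edge xyC).
  by move=> u w /setD1P[_ /supp_edge/andP[-> ->]].
have degA v : v \in A -> degree D v + (v == x) = 2.
  move=> vA; have vy : v != y by apply: contraNneq nxy => <-; rewrite inE in vA.
  by rewrite -(Cdeg v (suppA v vA)) [RHS](degreeD1 v xyC) !inE (negbTE vy) orbF.
have : \sum_(v in A) (degree D v + (v == x)) = \sum_(v in A) 2.
  by apply: eq_bigr => v /degA.
rewrite big_split sum_nat_const /= [X in _ + X](bigD1 x xA) eqxx [X in _ + (_ + X)]big1; last by move=> v /andP[_ /negbTE ->].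
by move/(congr1 odd); rewrite addn0 oddD oddM andbF (negbTE (degree_sum_even D2 closedA)).
Qed.

End Degrees.

Lemma next_neq {T : eqType} {c : seq T} {u : T} :
  uniq c -> 2 < size c -> u \in c -> (next c u != u) && (next c (next c u) != u).
Proof.
move=> uc sc uc_u; case: (rot_to uc_u) => i s' rotE.
rewrite -!(next_rot i uc) rotE.
have : uniq (u :: s') by rewrite -rotE rot_uniq.
have : 2 < size (u :: s') by rewrite -rotE size_rot.
case: s' {rotE} => [|w [|z r]] //= _.
rewrite !inE negb_or => /andP[/andP[uw /norP[uz _]] /andP[wzr _]].
by rewrite !eqxx (eq_sym w u) uw (negbTE uw) eq_sym uz.
Qed.

Section CycleEdges.
Context {V : finType}.
Implicit Types (F : {set {set V}}) (c p : seq V) (x v : V).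

Definition cycle_edges c : {set {set V}} := [set [set v; next c v] | v in c].

Lemma cycle_edges_sub {F c} : cycle (adj F) c -> cycle_edges c \subset F.
Proof. by move=> cyc; apply/subsetP => d /imsetP[v vc ->]; apply: next_cycle cyc vc. Qed.

Lemma supp_cycle_edges c v : v \in supp (cycle_edges c) -> v \in c.
Proof.
rewrite inE => /existsP[d /andP[/imsetP[u uc ->]]].
by case/set2P => ->; rewrite ?mem_next.
Qed.

(* Each point of c lies on exactly two edges: those to its predecessor and to
   its successor. *)
Lemma degree_cycle_edges c v :
  uniq c -> 2 < size c -> v \in c -> degree (cycle_edges c) v = 2.
Proof.
move=> uc sc vc; have /andP[pv ppv] := next_neq uc sc (etrans (mem_prev c v) vc).
rewrite next_prev // in pv ppv; rewrite /degree.
have -> : [set d in cycle_edges c | v \in d] =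
          [set [set prev c v; v]; [set v; next c v]].
  apply/setP => d; rewrite !inE; apply/idP/idP.
    case/andP=> /imsetP[u uc_u ->] /set2P[-> | vn]; first by rewrite eqxx orbT.
    by rewrite vn prev_next // eqxx.
  case/orP=> /eqP ->; rewrite ?set21 ?set22 andbT; last exact: imset_f.
  by apply/imsetP; exists (prev c v); rewrite ?mem_prev // next_prev.
rewrite cards2; suff -> : [set prev c v; v] != [set v; next c v] by [].
apply/eqP => pv_vn.
have /set2P[] : prev c v \in [set v; next c v] by rewrite -pv_vn set21.
  by move=> pvv; rewrite pvv eqxx in pv.
by move=> pn; rewrite pn eqxx in ppv.
Qed.

Lemma cycle_edges_is_cycle {x p} :
  uniq (x :: p) -> 2 < size (x :: p) -> is_cycle (cycle_edges (x :: p)).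
Proof.
set c := x :: p => uc sc; split.
- by apply/set0Pn; exists [set x; next c x]; apply: imset_f; rewrite mem_head.
- move=> d /imsetP[v vc ->]; have /andP[nv _] := next_neq uc sc vc.
  by rewrite cards2 eq_sym nv.
- by move=> v /supp_cycle_edges; apply: degree_cycle_edges.
have path_c : path (adj (cycle_edges c)) x p.
  have := cycle_next uc; rewrite /c /= rcons_path => /andP[next_p _].
  apply: (sub_in_path (P := mem c)) next_p; last by apply/allP.
  by move=> u w uc_u _ /eqP <-; apply: imset_f.
move=> a b /supp_cycle_edges ac /supp_cycle_edges bc.
rewrite (connect_trans (y := x)) //; first by rewrite connect_adjC (path_connect path_c).
exact: path_connect path_c _ bc.
Qed.

(* In a simple acyclic graph, deleting an edge separates its two ends: a
   detour would close a cycle with the edge. *)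
Lemma acyclic_delete_edge {F x y} : simple_edges F -> acyclic F ->
  [set x; y] \in F -> ~~ connect (adj (F :\ [set x; y])) x y.
Proof.
move=> F2 acF xyF; apply/negP => /connectP[p0 path_p0].
case: (shortenP path_p0) => p path_p uniq_p _ y_last.
have xy : x != y by have := F2 _ xyF; rewrite cards2; case: (x != y).
have path_F : path (adj F) x p.
  by apply: sub_path path_p => u w; rewrite /adj inE => /andP[].
have cyc : cycle (adj F) (x :: p).
  by rewrite /= rcons_path path_F -y_last adj_sym.
have sc : 2 < size (x :: p).
  move: path_p y_last; case: p {uniq_p path_F cyc} => [|z [|w r]] //=.
    by move=> _ yx; rewrite yx eqxx in xy.
  by rewrite andbT /adj => + yz; rewrite -yz !inE eqxx.
exact: (acF _ (cycle_edges_sub cyc) (cycle_edges_is_cycle uniq_p sc)).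
Qed.

End CycleEdges.

Section SpanningTrees.
Context {V : finType}.
Implicit Types (T C : {set {set V}}).

Lemma fundamental_cycle_mem {T C f1 f2 s1 s2} : simple_edges T -> acyclic T ->
  [set f1; f2] \in T -> [set s1; s2] \notin T ->
  is_cycle C -> C \subset T :|: [set [set s1; s2]] ->
  ([set f1; f2] \in C) = ~~ connect (adj (T :\ [set f1; f2])) s1 s2.
Proof.
set f := [set f1; f2]; set s := [set s1; s2] => T2 acT fT sNT cycC CTs.
apply/idP/idP => [fC | sepT].
  apply/negP => s12; case/negP: (acyclic_delete_edge T2 acT fT).
  apply: connect_redundant_edge s12 (cycle_delete_edge cycC fC).
  apply/subsetP => d /setD1P[df /(subsetP CTs)].
  by rewrite !inE df.
have sC : s \in C.
  apply/negPn/negP => sNC; apply: (acT C) cycC; apply/subsetP => d dC.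
  have := subsetP CTs d dC; rewrite !inE => /orP[// | /eqP ds].
  by rewrite -ds dC in sNC.
apply/negPn/negP => fNC; case/negP: sepT.
apply: connect_adj_sub (cycle_delete_edge cycC sC).
apply/subsetP => d /setD1P[ds dC]; have := subsetP CTs d dC.
rewrite !inE (negbTE ds) orbF => ->; rewrite andbT.
by apply: contraNneq fNC => <-.
Qed.

Lemma tree_exchange_connected {T f1 f2} s1 s2 :
  simple_edges T -> acyclic T -> connected_sp T -> [set f1; f2] \in T ->
  connected_sp (T :\ [set f1; f2] :|: [set [set s1; s2]]) <->
  ~~ connect (adj (T :\ [set f1; f2])) s1 s2.
Proof.
set f := [set f1; f2]; set K := T :\ f :|: _ => T2 acT cT fT; split => [cK | sepT].
  apply/negP => s12; case/negP: (acyclic_delete_edge T2 acT fT).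
  exact: connect_redundant_edge (subxx _) s12 (cK f1 f2).
have DK u v : connect (adj (T :\ f)) u v -> connect (adj K) u v.
  by apply: connect_adj_sub; apply: subsetUl.
have Kf : connect (adj K) f1 f2.
  apply/negPn/negP => sepK; case/negP: sepT.
  apply: connect_via_ends DK sepK _ _ _.
  - by apply: connect1; rewrite /adj !inE eqxx orbT.
  - by rewrite !(connect_adjC _ s1); apply: connected_delete_edge.
  - exact: connected_delete_edge.
have Kf1 v : connect (adj K) f1 v.
  by case: (connected_delete_edge f1 f2 v cT) => /DK //; apply: connect_trans Kf.
by move=> x y; apply: connect_trans (Kf1 y); rewrite connect_adjC.
Qed.

End SpanningTrees.

Section Exchange.
Context {V : finType}.
Implicit Types (T : {set {set V}}).

Lemma exchange_same_components {T} {e : {set V}} {f1 f2 a1 a2 : V} :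
  simple_edges T -> acyclic T -> [set f1; f2] \in T ->
  connected_sp (T :\ e :|: [set [set a1; a2]]) ->
  connect (adj (T :\ [set f1; f2])) a1 a2 ->
  connect (adj (T :\ [set f1; f2])) =2
  connect (adj ((T :\ e :|: [set [set a1; a2]]) :\ [set f1; f2])).
Proof.
set f := [set f1; f2]; set a := [set a1; a2] => T2 acT fT cT' a12.
have sub : (T :\ e :|: [set a]) :\ f \subset T :\ f :|: [set a].
  by apply/subsetP => d; rewrite !inE; case: (d \in T); case: (d == e);
     case: (d == f); case: (d == a).
move=> x y; apply/idP/idP; last exact: connect_redundant_edge sub a12.
apply: connect_delete_maximal cT' _ (acyclic_delete_edge T2 acT fT) => u v.
exact: connect_redundant_edge sub a12.
Qed.

(* If the ends of s are joined in T - e, then they are joined in T - f iff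
   they are joined in T' - f, where T' = T - e + a is a spanning tree: a walk
   in either graph can be rerouted to avoid e, resp. a. *)
Lemma exchange_same_connection {T} {e1 e2 a1 a2 : V} (f : {set V}) {s1 s2 : V} :
  simple_edges T -> acyclic T -> connected_sp T -> [set e1; e2] \in T ->
  connected_sp (T :\ [set e1; e2] :|: [set [set a1; a2]]) ->
  connect (adj (T :\ [set e1; e2])) s1 s2 ->
  connect (adj (T :\ f)) s1 s2 =
  connect (adj ((T :\ [set e1; e2] :|: [set [set a1; a2]]) :\ f)) s1 s2.
Proof.
set e := [set e1; e2]; set a := [set a1; a2] => T2 acT cT eT cT' s12.
have sep_e := acyclic_delete_edge T2 acT eT.
have sep_a := (tree_exchange_connected a1 a2 T2 acT cT eT).1 cT'.
apply/idP/idP => conn_s.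
  apply: connect_adj_sub (connect_avoid_edge _ sep_e s12 conn_s).
    by apply/subsetP => d; rewrite !inE; case: (d \in T); case: (d == e);
       case: (d == f); case: (d == a).
  by apply/subsetP => d; rewrite !inE; case: (d \in T); case: (d == e);
     case: (d == f).
apply: connect_adj_sub (connect_avoid_edge _ sep_a s12 conn_s).
  by apply/subsetP => d; rewrite !inE; case: (d \in T); case: (d == e);
     case: (d == f); case: (d == a).
by apply/subsetP => d; rewrite !inE; case: (d \in T); case: (d == e);
   case: (d == f); case: (d == a).
Qed.

End Exchange.

Theorem lemmaD1 (V : finType) (E T : {set {set V}}) (e se f s : {set V})
    (Ce Cs Ce' Cs' : {set {set V}}) :
  simple_edges E ->
  spanning_tree E T ->
  e \in T -> se \in E :\: T ->
  spanning_tree E ((T :\ e) :|: [set se]) ->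
  f \in T :\ e ->
  s \in E :\: (T :|: [set se]) ->
  is_cycle Ce -> Ce \subset T :|: [set se] ->
  is_cycle Cs -> Cs \subset T :|: [set s] ->
  is_cycle Ce' -> Ce' \subset ((T :\ e) :|: [set se]) :|: [set e] ->
  is_cycle Cs' -> Cs' \subset ((T :\ e) :|: [set se]) :|: [set s] ->
  ~ ((f \in Ce /\ e \in Cs) \/ (f \in Ce' /\ se \in Cs')) ->
  (connected_sp ((T :\ f) :|: [set s]) <->
   connected_sp ((((T :\ e) :|: [set se]) :\ f) :|: [set s])).
Proof.
move=> E2 [TE cT acT] eT /setDP[seE seNT] [T'E cT' acT'] /setD1P[fNe fT]
  /setDP[sE sNTse] cycCe CeT cycCs CsT _ _ _ _ not_both.
have T2 : simple_edges T by move=> c /(subsetP TE)/E2.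
have T'2 : simple_edges (T :\ e :|: [set se]) by move=> c /(subsetP T'E)/E2.
have sNT : s \notin T by apply: contraNN sNTse; rewrite inE => ->.
have fT' : f \in T :\ e :|: [set se] by rewrite !inE fNe fT.
have /cards2P[f1 [f2 [_ def_f]]] : #|f| == 2 by rewrite T2.
have /cards2P[e1 [e2 [_ def_e]]] : #|e| == 2 by rewrite T2.
have /cards2P[a1 [a2 [_ def_se]]] : #|se| == 2 by rewrite E2.
have /cards2P[s1 [s2 [_ def_s]]] : #|s| == 2 by rewrite E2.
subst f e se s.
(* Both sides say that deleting f separates the ends of s, in T resp. T'. *)
apply: iff_trans (tree_exchange_connected s1 s2 T2 acT cT fT) _.
apply: iff_sym; apply: iff_trans (tree_exchange_connected s1 s2 T'2 acT' cT' fT') _.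
(* Excluding case (i): f is off Ce or e is off Cs. *)
have [a12 | s12] : connect (adj (T :\ [set f1; f2])) a1 a2 \/
                   connect (adj (T :\ [set e1; e2])) s1 s2.
  move: not_both; rewrite (fundamental_cycle_mem T2 acT fT seNT cycCe CeT).
  rewrite (fundamental_cycle_mem T2 acT eT sNT cycCs CsT).
  have [|sep_a] := boolP (connect _ a1 a2); first by left.
  have [|sep_s] := boolP (connect _ s1 s2); first by right.
  by case; left; split.
- by rewrite (exchange_same_components T2 acT fT cT' a12).
- by rewrite (exchange_same_connection _ T2 acT cT eT cT' s12).
Qed.
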